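(* The linear map $F:\mathcal{B}\to QSym$ defined on basis elements by $F(B)=F(P_B)$ (with $F(B_\emptyset)=1$) is a morphism of combinatorial Hopf algebras $(\mathcal{B},\zeta)\to(QSym,\zeta_Q)$; that is, $F$ is a morphism of graded Hopf algebras and $\zeta_Q\circ F=\zeta$. In particular $F(P_{B_1\sqcup B_2})=F(P_{B_1})F(P_{B_2})$ and $\Delta(F(P_B))=\sum_{I\subseteq V}F(P_{B|_I})\otimes F(P_{B/I})$.
   Context: A building set on a finite set $V$ is a collection $B$ of nonempty subsets of $V$ such that $\{v\}\in B$ for all $v\in V$ and such that $I,J\in B$, $I\cap J\neq\emptyset$ imply $I\cup J\in B$. It is connected if $V\in B$, and discrete if it consists only of the singletons. For $I\subseteq V$, the restriction is $B|_I=\{J\in B: J\subseteq I\}$ (a building set on $I$) and the contraction is $B/I=\{J\subseteq V\setminus I: J\neq\emptyset,\ J\in B\text{ or }J\cup I'\in B\text{ for some }I'\subseteq I\}$ (a building set on $V\setminus I$). The nestohedron of $B$ is the Minkowski sum $P_B=\sum_{I\in B}\mathrm{Conv}\{e_i: i\in I\}\subset\mathbb{R}^V$. For a convex polytope $Q\subset\mathbb{R}^V$, a function $f:V\to\mathbb{N}=\{1,2,\dots\}$ is $Q$-generic if the linear functional $x\mapsto\sum_{v\in V}f(v)x_v$ attains its maximum over $Q$ at a unique point. Set $F(Q)=\sum_{f\ Q\text{-generic}}\prod_{v\in V}x_{f(v)}$. For a composition $\alpha=(a_1,\dots,a_k)\models n$, $M_\alpha=\sum_{i_1<\dots<i_k}x_{i_1}^{a_1}\cdots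 x_{i_k}^{a_k}$, $M_{()}=1$. $\mathcal{B}$ is the Hopf algebra over a field $k$ with basis the isomorphism classes of building sets on finite sets, graded by ground set size, with product $B_1\cdot B_2=B_1\sqcup B_2$, coproduct $\Delta(B)=\sum_{I\subseteq V}B|_I\otimes B/I$, unit the empty building set $B_\emptyset$ and counit $\epsilon(B_\emptyset)=1$, $\epsilon(B)=0$ otherwise. The character $\zeta:\mathcal{B}\to k$ is $\zeta(B)=1$ if $B$ is discrete (including $B_\emptyset$) and $0$ otherwise. $QSym$ is the usual Hopf algebra of quasisymmetric functions (coproduct $\Delta M_{(a_1,\dots,a_k)}=\sum_{j=0}^k M_{(a_1,\dots,a_j)}\otimes M_{(a_{j+1},\dots,a_k)}$), and $\zeta_Q:QSym\to k$ is the character with $\zeta_Q(M_\alpha)=1$ if $\alpha=()$ or $\alpha$ has a single part, and $0$ otherwise. *)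

From HB Require Import structures.
From mathcomp Require Import all_boot all_order all_algebra.
From Stdlib Require Import ClassicalEpsilon.
Set Implicit Arguments. Unset Strict Implicit. Unset Printing Implicit Defensive.
Import Order.TTheory GRing.Theory Num.Theory.
Local Open Scope ring_scope.

Definition pbool (P : Prop) : bool :=
  if excluded_middle_informative P then true else false.

Definition building_set (V : finType) (B : {set {set V}}) : Prop :=
  (forall I, I \in B -> I != set0) /\
  (forall v : V, [set v] \in B) /\
  (forall I J, I \in B -> J \in B -> I :&: J != set0 -> I :|: J \in B).

Definition restr (V : finType) (B : {set {set V}}) (I : {set V})
  : {set {set {v : V | v \in I}}} :=
  [set J : {set {v : V | v \in I}} | [set val x | x in J] \in B].

Definition contr (V : finType) (B : {set {set V}}) (I : {set V})
  : {set {set {v : V | v \notin I}}} :=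
  [set J : {set {v : V | v \notin I}} |
     (J != set0) &&
     (([set val x | x in J] \in B) ||
      [exists I' : {set V}, (I' \subset I) && ([set val x | x in J] :|: I' \in B)])].

Definition dunion (V1 V2 : finType) (B1 : {set {set V1}}) (B2 : {set {set V2}})
  : {set {set (V1 + V2)%type}} :=
  [set [set (@inl V1 V2) x | x in I] | I : {set V1} in B1] :|:
  [set [set (@inr V1 V2) x | x in J] | J : {set V2} in B2].

Definition discrete (V : finType) (B : {set {set V}}) : bool :=
  B == [set [set v] | v : V].

Definition evec (V : finType) (i : V) : V -> rat := fun v => (i == v)%:R.

Definition in_conv (V : finType) (A : {set V}) (p : V -> V -> rat) (x : V -> rat) : Prop :=
  exists l : V -> rat,
    (forall i, i \in A -> 0 <= l i) /\ \sum_(i in A) l i = 1 /\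
    forall v, x v = \sum_(i in A) l i * p i v.

(* P_B = Minkowski sum over I in B of Conv{e_i : i in I} *)
Definition nesto (V : finType) (B : {set {set V}}) (x : V -> rat) : Prop :=
  exists y : {set V} -> V -> rat,
    (forall I, I \in B -> in_conv I (@evec V) (y I)) /\
    forall v, x v = \sum_(I in B) y I v.

Definition linf (V : finType) (f : V -> nat) (x : V -> rat) : rat :=
  \sum_(v : V) (f v)%:R * x v.

Definition generic (V : finType) (Q : (V -> rat) -> Prop) (f : V -> nat) : Prop :=
  exists x, Q x /\
    forall y, Q y -> linf f y <= linf f x /\ (linf f y = linf f x -> forall v, y v = x v).

(* ---------- Formal power series in x_1, x_2, ... ----------
   A series is given by its coefficient function on monomials; the monomial
   x_1^{m_0} x_2^{m_1} ... x_s^{m_{s-1}} is encoded by the list m. *)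
Definition series (k : fieldType) := seq nat -> k.

(* F(Q) = sum over Q-generic f : V -> {1,2,...} of prod_v x_{f(v)};
   f is encoded as g : V -> 'I_s with f v = (g v).+1 *)
Definition Fpoly (k : fieldType) (V : finType) (Q : (V -> rat) -> Prop) : series k :=
  fun m => (#|[set g : {ffun V -> 'I_(size m)} |
                pbool (generic Q (fun v => (g v).+1)) &&
                [forall j : 'I_(size m), #|[set v | g v == j]| == nth 0 m j]]|)%:R.

Definition FB (k : fieldType) (V : finType) (B : {set {set V}}) : series k :=
  Fpoly k (nesto B).

Fixpoint le_seqs (m : seq nat) : seq (seq nat) :=
  if m is a :: m' then [seq i :: s | i <- iota 0 a.+1, s <- le_seqs m'] else [:: [::]].

Definition mulS (k : fieldType) (G H : series k) : series k :=
  fun m => \sum_(m1 <- le_seqs m) G m1 * H [seq (p.2 - p.1)%N | p <- zip m1 m].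

Definition oneS (k : fieldType) : series k :=
  fun m => (all (fun a => a == 0%N) m)%:R.

(* quasisymmetric: coefficient of x_{i1}^{a1}..x_{ir}^{ar} (i1<..<ir) equals
   that of x_1^{a1}..x_r^{ar}; then G = sum_alpha G(alpha) M_alpha *)
Definition qsym (k : fieldType) (G : series k) : Prop :=
  forall m, G m = G [seq a <- m | a != 0%N].

Definition homogeneous (k : fieldType) (n : nat) (G : series k) : Prop :=
  forall m, sumn m != n -> G m = 0.

Definition composition (a : seq nat) : bool := all (fun x => 0 < x)%N a.

(* coefficient of M_alpha in a quasisymmetric G *)
Definition Mcoef (k : fieldType) (G : series k) (alpha : seq nat) : k := G alpha.

(* Delta M_a = sum_j M_(a1..aj) (x) M_(aj+1..ak): coefficient of M_b (x) M_c in Delta G *)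
Definition coprodQ (k : fieldType) (G : series k) (b c : seq nat) : k :=
  Mcoef G (b ++ c).

(* coefficient of M_b (x) M_c in G (x) H *)
Definition tensorQ (k : fieldType) (G H : series k) (b c : seq nat) : k :=
  Mcoef G b * Mcoef H c.

Definition counitQ (k : fieldType) (G : series k) : k := Mcoef G [::].

(* zeta_Q on an element of degree <= d: sum of coefficients of M_() and M_(n) *)
Definition zetaQ (k : fieldType) (d : nat) (G : series k) : k :=
  Mcoef G [::] + \sum_(1 <= n < d.+1) Mcoef G [:: n].

Definition zetaB (k : fieldType) (V : finType) (B : {set {set V}}) : k :=
  (discrete B)%:R.

From HB Require Import structures.
From mathcomp Require Import all_boot all_order all_algebra.
From mathcomp Require Import zify.
From Stdlib Require Import ClassicalEpsilon.
Set Implicit Arguments. Unset Strict Implicit. Unset Printing Implicit Defensive.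
Import Order.TTheory GRing.Theory Num.Theory.
Local Open Scope ring_scope.

(* A linear functional [f] attains its maximum over the simplex Conv{e_i : i in I}
   at a unique point iff [f] has a unique maximum on [I]; over the Minkowski sum
   [P_B] it is maximised uniquely iff it is so on every summand.  Hence [F(B)]
   counts colourings of [V] having a unique top colour on every [I] in [B], and
   the Hopf identities become bijections between colourings: deleting an empty
   colour class gives quasisymmetry, splitting a colouring of [V1 + V2] gives the
   product, and splitting a colouring of [V] into its first [p] and last [q]
   colours gives the coproduct, the vertices [I] with low colours carrying a
   generic colouring of [B|_I] and the others one of [B/I]. *)

Definition is_max (V : finType) (f : V -> nat) (A : {set V}) (a : V) : bool :=
  (a \in A) && [forall i in A, f i <= f a]%N.

Definition uniq_max (V : finType) (f : V -> nat) (A : {set V}) : bool :=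
  [exists a in A, [forall i in A, (i != a) ==> (f i < f a)%N]].

Definition max_generic (V : finType) (B : {set {set V}}) (f : V -> nat) : bool :=
  [forall I in B, uniq_max f I].

Section NestohedronGeneric.
Variable V : finType.
Implicit Types (f : V -> nat) (A : {set V}) (B : {set {set V}}) (x y : V -> rat).

Lemma eq_linf f x y : x =1 y -> linf f x = linf f y.
Proof. by move=> E; apply: eq_bigr => v _; rewrite E. Qed.

Lemma linf_evec f a : linf f (evec a) = (f a)%:R.
Proof.
rewrite /linf (bigD1 a) //= /evec eqxx mulr1 big1 ?addr0 // => v /negPf.
by rewrite eq_sym => ->; rewrite mulr0.
Qed.

Lemma linf_sum (I : finType) (P : pred I) f (z : I -> V -> rat) :
  linf f (fun v => \sum_(i | P i) z i v) = \sum_(i | P i) linf f (z i).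
Proof.
by rewrite /linf; under eq_bigr do rewrite mulr_sumr; rewrite exchange_big.
Qed.

Lemma linf_conv f A (l : V -> rat) :
  linf f (fun v => \sum_(i in A) l i * evec i v) = \sum_(i in A) l i * (f i)%:R.
Proof.
rewrite linf_sum; apply: eq_bigr => i _.
by rewrite -linf_evec /linf mulr_sumr; apply: eq_bigr => v _; rewrite mulrCA.
Qed.

Lemma conv_evec A a : a \in A -> in_conv A (@evec V) (evec a).
Proof.
move=> aA; exists (fun i => (i == a)%:R); split=> [i _|]; first by rewrite ler0n.
split; first by rewrite (bigD1 a) //= eqxx big1 ?addr0 // => i /andP[_ /negPf ->].
move=> v; rewrite (bigD1 a) //= eqxx mul1r big1 ?addr0 // => i /andP[_ /negPf ->].
by rewrite mul0r.
Qed.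

Lemma in_conv_neq0 A (p : V -> V -> rat) x : in_conv A p x -> A != set0.
Proof.
case=> l [_ [l1 _]]; apply/negP => /eqP A0; move: l1.
by rewrite A0 big_set0 => /eqP; rewrite eq_sym oner_eq0.
Qed.

Lemma linf_conv_le f A a x :
  is_max f A a -> in_conv A (@evec V) x -> linf f x <= (f a)%:R.
Proof.
move=> /andP[_ /forall_inP fa] [l [l0 [l1 xE]]].
rewrite (eq_linf _ xE) linf_conv.
have <- : \sum_(i in A) l i * (f a)%:R = (f a)%:R by rewrite -mulr_suml l1 mul1r.
by apply: ler_sum => i iA; rewrite ler_wpM2l ?l0 // ler_nat fa.
Qed.

Lemma linf_conv_eq f A a x :
  a \in A -> (forall i, i \in A -> i != a -> (f i < f a)%N) ->
  in_conv A (@evec V) x -> linf f x = (f a)%:R -> x =1 evec a.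
Proof.
move=> aA fa [l [l0 [l1 xE]]]; rewrite (eq_linf _ xE) linf_conv => E.
have ge0 j : j \in A -> 0 <= l j * ((f a)%:R - (f j)%:R).
  move=> jA; rewrite mulr_ge0 ?l0 // subr_ge0 ler_nat.
  by have [->|/(fa j jA)/ltnW] := eqVneq j a.
have /(psumr_eq0P ge0) lA0 : \sum_(i in A) l i * ((f a)%:R - (f i)%:R) = 0.
  by under eq_bigr do rewrite mulrBr; rewrite sumrB -mulr_suml l1 mul1r E subrr.
have l0' i : i \in A -> i != a -> l i = 0.
  move=> iA ia; apply/eqP; move/eqP: (lA0 i iA).
  by rewrite mulf_eq0 subr_eq0 eqr_nat (gtn_eqF (fa i iA ia)) orbF.
have la : l a = 1.
  by rewrite -l1 (bigD1 a) //= big1 ?addr0 // => i /andP[iA ia]; apply: l0'.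
move=> v; rewrite xE (bigD1 a) //= la mul1r big1 ?addr0 // => i /andP[iA ia].
by rewrite l0' ?mul0r.
Qed.

Section Selector.
Variables (B : {set {set V}}) (f : V -> nat).

(* A vertex of the nestohedron: one vertex e_a chosen from each simplex. *)
Definition sel_point (s : {set V} -> option V) : V -> rat :=
  fun v => \sum_(I in B) oapp (fun a => evec a v) 0 (s I).

Definition max_selector (s : {set V} -> option V) : Prop :=
  forall I, I \in B -> exists2 a, s I = Some a & is_max f I a.

Variables (s : {set V} -> option V) (sB : max_selector s).

Lemma sel_point_nesto : nesto B (sel_point s).
Proof.
exists (fun I v => oapp (fun a => evec a v) 0 (s I)); split=> // I IB.
by have [a -> /andP[aI _]] := sB IB; apply: conv_evec.
Qed.

Lemma linf_sel_point :
  linf f (sel_point s) = \sum_(I in B) oapp (fun a => (f a)%:R) 0 (s I).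
Proof.
rewrite linf_sum; apply: eq_bigr => I IB.
by have [a -> _] := sB IB; rewrite /= -linf_evec.
Qed.

Lemma sel_point_max_gap y : nesto B y -> exists2 z : {set V} -> V -> rat,
  y =1 (fun v => \sum_(I in B) z I v) &
  forall I, I \in B -> [/\ in_conv I (@evec V) (z I) &
    0 <= oapp (fun a => (f a)%:R) 0 (s I) - linf f (z I)].
Proof.
case=> z [zc yE]; exists z => // I IB; split; first exact: zc.
by have [a -> aI] := sB IB; rewrite subr_ge0 (linf_conv_le aI (zc I IB)).
Qed.

Lemma sel_point_max y : nesto B y -> linf f y <= linf f (sel_point s).
Proof.
case/sel_point_max_gap=> z yE zI; rewrite (eq_linf _ yE) linf_sum linf_sel_point.
by rewrite -subr_ge0 -sumrB sumr_ge0 // => I /zI[].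
Qed.

Lemma sel_point_unique y :
  (forall I a, I \in B -> s I = Some a ->
     forall i, i \in I -> i != a -> (f i < f a)%N) ->
  nesto B y -> linf f y = linf f (sel_point s) -> y =1 sel_point s.
Proof.
move=> sstrict /sel_point_max_gap[z yE zI].
rewrite (eq_linf _ yE) linf_sum linf_sel_point => /eqP; rewrite eq_sym -subr_eq0.
rewrite -sumrB => /eqP/psumr_eq0P gap0 v; rewrite yE; apply: eq_bigr => I IB.
have [a sa /andP[aI _]] := sB IB; have [zcI _] := zI I IB.
move: (gap0 (fun I IB => (zI I IB).2) I IB); rewrite sa /= => /eqP.
rewrite subr_eq0 eq_sym => /eqP Ez.
exact: (linf_conv_eq aI (sstrict I a IB sa) zcI Ez v).
Qed.
End Selector.

Lemma is_max_exists f A : A != set0 -> exists a, is_max f A a.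
Proof.
case/set0Pn=> a0 a0A; have [a aA fa] := arg_maxnP f a0A.
by exists a; apply/andP; split=> //; apply/forall_inP => i /fa.
Qed.

Lemma uniq_max_strict f A a : uniq_max f A -> is_max f A a ->
  forall i, i \in A -> i != a -> (f i < f a)%N.
Proof.
case/exists_inP=> c cA /forall_inP fc /andP[aA /forall_inP fa] i iA ia.
have [ac|ac] := eqVneq a c; first by move: (fc i iA); rewrite -ac ia.
by move: (fc a aA) (fa c cA); rewrite ac /= => /leq_trans/[apply]; rewrite ltnn.
Qed.

Definition pick_max f A : option V := [pick a | is_max f A a].

Lemma pick_max_selector B f :
  (forall I, I \in B -> I != set0) -> max_selector B f (pick_max f).
Proof.
move=> Bn0 I IB; rewrite /pick_max; case: pickP => [a|no_max]; first by exists a.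
by have [a] := is_max_exists f (Bn0 I IB); rewrite no_max.
Qed.

Lemma generic_sel_point B f s s' : generic (nesto B) f ->
  max_selector B f s -> max_selector B f s' -> sel_point B s =1 sel_point B s'.
Proof.
case=> x [nx xmax] sB s'B.
have to_x t : max_selector B f t -> sel_point B t =1 x.
  move=> tB; have [le_tx eq_tx] := xmax _ (sel_point_nesto tB).
  by apply: eq_tx; apply/eqP; rewrite eq_le le_tx (sel_point_max tB nx).
by move=> v; rewrite to_x ?to_x.
Qed.

(* Two maximisers [a0], [b] of [f] on some [I0] in [B] give two vertices of the
   nestohedron that are both maximal for [f] and differ in coordinate [b]. *)
Lemma generic_nesto_max_generic B f : generic (nesto B) f -> max_generic B f.
Proof.
move=> gen; apply/forall_inP => I0 I0B; apply: contraT => not_uniq.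
have Bn0 I : I \in B -> I != set0.
  by case: gen => x [[z [zc _]] _]; move/zc/in_conv_neq0.
have sB := pick_max_selector f Bn0; have [a0 sa0 a0max] := sB I0 I0B.
have [b bI0] : exists2 b, b \in I0 & (b != a0) && (f a0 <= f b)%N.
  case/andP: a0max => a0I0 _; move: not_uniq; rewrite negb_exists_in.
  move/forall_inP/(_ a0 a0I0); rewrite negb_forall_in => /exists_inP[b bI0].
  by rewrite negb_imply -leqNgt; exists b.
case/andP=> ba0 fab.
pose s' I := if I == I0 then Some b else pick_max f I.
have s'B : max_selector B f s'.
  move=> I IB; rewrite /s'; case: eqP => [->|_]; last exact: sB.
  exists b => //; rewrite /is_max bI0; apply/forall_inP => i iI0.
  by case/andP: a0max => _ /forall_inP/(_ i iI0)/leq_trans; apply.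
have := generic_sel_point gen sB s'B b; rewrite /sel_point (bigD1 I0) //= [in RHS](bigD1 I0) //=.
rewrite (eq_bigr (fun I => oapp (fun a => evec a b) 0 (s' I))); last first.
  by move=> I /andP[_ /negPf]; rewrite /s' => ->.
rewrite sa0 /s' eqxx /= /evec eq_sym (negPf ba0) eqxx => /addIr/eqP.
by rewrite eq_sym oner_eq0.
Qed.

Lemma max_generic_generic_nesto B f : max_generic B f -> generic (nesto B) f.
Proof.
move=> /forall_inP uniqB.
have Bn0 I : I \in B -> I != set0.
  by move/uniqB/exists_inP=> [a aI _]; apply/set0Pn; exists a.
have sB := pick_max_selector f Bn0.
have strict I a : I \in B -> pick_max f I = Some a ->
    forall i, i \in I -> i != a -> (f i < f a)%N.
  move=> IB; rewrite /pick_max; case: pickP => // a' a'max [<-].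
  exact: uniq_max_strict (uniqB I IB) a'max.
exists (sel_point B (pick_max f)); split; first exact: sel_point_nesto sB.
move=> y ny; split; first exact: (sel_point_max sB ny).
by move=> E v; apply: (sel_point_unique sB strict ny E).
Qed.

Lemma generic_nestoE B f : generic (nesto B) f <-> max_generic B f.
Proof. by split; [apply: generic_nesto_max_generic | apply: max_generic_generic_nesto]. Qed.

End NestohedronGeneric.

Local Close Scope ring_scope.

Section MaxGenericInvariance.
Variable V : finType.
Implicit Types (f : V -> nat) (A : {set V}) (B : {set {set V}}).

Lemma eq_uniq_max_lt f f' A :
  (forall x y, (f x < f y) = (f' x < f' y)) -> uniq_max f A = uniq_max f' A.
Proof.
move=> flt; apply: eq_existsb => a; congr (_ && _).
by apply: eq_forallb => i; rewrite flt.
Qed.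

Lemma eq_max_generic_lt B f f' :
  (forall x y, (f x < f y) = (f' x < f' y)) -> max_generic B f = max_generic B f'.
Proof. by move=> flt; apply: eq_forallb => I; rewrite (eq_uniq_max_lt _ flt). Qed.

Lemma eq_max_generic B f f' : f =1 f' -> max_generic B f = max_generic B f'.
Proof. by move=> ff'; apply: eq_max_generic_lt => x y; rewrite !ff'. Qed.

Lemma uniq_max_imset (T : finType) (h : T -> V) f (A : {set T}) :
  injective h -> uniq_max f (h @: A) = uniq_max (f \o h) A.
Proof.
move=> inj_h; apply/exists_inP/exists_inP => [[_ /imsetP[a aA ->] /forall_inP fa]|].
  exists a => //; apply/forall_inP => i iA.
  by have := fa (h i) (imset_f _ iA); rewrite (inj_eq inj_h).
case=> a aA /forall_inP fa; exists (h a); first exact: imset_f.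
by apply/forall_inP => _ /imsetP[i iA ->]; rewrite (inj_eq inj_h); apply: fa.
Qed.

Lemma uniq_max_setU f A A' : A != set0 ->
  (forall a i, a \in A -> i \in A' -> f i < f a) -> uniq_max f (A :|: A') = uniq_max f A.
Proof.
move=> An0 A'ltA; apply/exists_inP/exists_inP => [[a aAC /forall_inP fa]|[a aA /forall_inP fa]].
  have aA : a \in A.
    case/setUP: aAC => // aA'; case/set0Pn: An0 => a' a'A.
    have := fa a' (subsetP (subsetUl _ _) _ a'A); have := A'ltA a' a a'A aA'.
    by have [->|_ /ltn_trans lt /lt] := eqVneq a' a; rewrite ?ltnn.
  by exists a => //; apply/forall_inP => i iA; apply: fa; rewrite inE iA.
exists a; first by rewrite inE aA.
apply/forall_inP => i /setUP[iA|iA']; first exact: fa.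
by rewrite A'ltA ?implybT.
Qed.

End MaxGenericInvariance.

Definition fiber_card (V : finType) (g : V -> nat) (j : nat) : nat :=
  #|[set v | g v == j]|.

Definition generic_colouring (V : finType) (n : nat) (B : {set {set V}})
    (h : nat -> nat) (g : {ffun V -> 'I_n}) : bool :=
  max_generic B (fun v => nat_of_ord (g v)) &&
  [forall j : 'I_n, fiber_card (fun v => nat_of_ord (g v)) j == h j].

Definition count_generic (V : finType) (n : nat) (B : {set {set V}}) (h : nat -> nat) : nat :=
  #|[set g : {ffun V -> 'I_n} | generic_colouring B h g]|.

Lemma eq_fiber_card (V : finType) (g g' : V -> nat) j :
  g =1 g' -> fiber_card g j = fiber_card g' j.
Proof. by move=> gg'; apply: eq_card => v; rewrite !inE gg'. Qed.

Lemma eq_count_generic (V : finType) n (B : {set {set V}}) (h h' : nat -> nat) :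
  {in gtn n, h =1 h'} -> count_generic n B h = count_generic n B h'.
Proof.
move=> hh'; apply: eq_card => g; rewrite !inE /generic_colouring; congr (_ && _).
by apply: eq_forallb => j; rewrite hh' // inE ltn_ord.
Qed.

Lemma pbool_eq (P : Prop) (b : bool) : (P <-> b) -> pbool P = b.
Proof.
rewrite /pbool; case: excluded_middle_informative => [p|np] [Pb bP].
  by rewrite Pb.
by case: b Pb bP => // _ /(_ isT).
Qed.

Lemma FB_count_generic (k : fieldType) (V : finType) (B : {set {set V}}) (m : seq nat) :
  FB k B m = (count_generic (size m) B (nth 0 m))%:R%R.
Proof.
rewrite /FB /Fpoly /count_generic; congr (_ %:R)%R; apply: eq_card => g.
rewrite !inE /generic_colouring; congr (_ && _); apply: pbool_eq; rewrite generic_nestoE.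
by rewrite (eq_max_generic_lt _ (f' := fun v => nat_of_ord (g v))).
Qed.

Lemma bump_ltE h x y : (bump h x < bump h y) = (x < y).
Proof. by rewrite /bump; case: (leqP h x); case: (leqP h y) => /= *; lia. Qed.

Section LiftColours.
Variables (V : finType) (n : nat) (j0 : 'I_n.+1).

Definition lift_colouring (g : {ffun V -> 'I_n}) : {ffun V -> 'I_n.+1} :=
  [ffun v => lift j0 (g v)].

Lemma lift_colouring_inj : injective lift_colouring.
Proof.
move=> g1 g2 /ffunP g12; apply/ffunP => v.
by move: (g12 v); rewrite !ffunE => /lift_inj.
Qed.

Lemma fiber_card_lift (g : {ffun V -> 'I_n}) j :
  fiber_card (fun v => nat_of_ord (lift_colouring g v)) (lift j0 j) =
  fiber_card (fun v => nat_of_ord (g v)) j.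
Proof. by apply: eq_card => v; rewrite !inE ffunE val_eqE (inj_eq (@lift_inj _ j0)). Qed.

Lemma fiber_card_lift_hole (g : {ffun V -> 'I_n}) :
  fiber_card (fun v => nat_of_ord (lift_colouring g v)) j0 = 0.
Proof.
apply/eqP; rewrite cards_eq0; apply/eqP/setP => v.
by rewrite !inE ffunE val_eqE eq_sym (negPf (neq_lift _ _)).
Qed.

Lemma generic_colouring_lift (B : {set {set V}}) (h : nat -> nat) (g : {ffun V -> 'I_n}) :
  h j0 = 0 ->
  generic_colouring B h (lift_colouring g) = generic_colouring B (h \o bump j0) g.
Proof.
move=> hj0; congr (_ && _).
  by apply: eq_max_generic_lt => x y; rewrite !ffunE /= bump_ltE.
apply/forallP/forallP => [gh j|gh j]; first by rewrite -fiber_card_lift gh.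
by case: (unliftP j0 j) => [j'|] ->; rewrite ?fiber_card_lift ?gh ?fiber_card_lift_hole ?hj0.
Qed.

Lemma colouring_avoid_lift (g : {ffun V -> 'I_n.+1}) :
  (forall v, g v != j0) -> exists g', g = lift_colouring g'.
Proof.
have unbump_lt (i : 'I_n.+1) : i != j0 -> unbump j0 i < n.
  move/eqP/val_eqP; have := ltn_ord i; have := ltn_ord j0; rewrite /unbump.
  by case: ltnP => /= *; lia.
move=> gj0; exists [ffun v => Ordinal (unbump_lt _ (gj0 v))].
apply/ffunP => v; rewrite !ffunE; apply: val_inj => /=.
by rewrite unbumpKcond val_eqE (negPf (gj0 v)).
Qed.

Lemma count_generic_lift (B : {set {set V}}) (h : nat -> nat) : h j0 = 0 ->
  count_generic n.+1 B h = count_generic n B (h \o bump j0).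
Proof.
move=> hj0; rewrite /count_generic -(card_imset _ lift_colouring_inj).
apply: eq_card => g; rewrite inE; apply/idP/imsetP => [gen|[g']].
  have gj0 v : g v != j0.
    apply: contraTneq gen => gvj0; rewrite negb_and negb_forall orbC.
    apply/orP; left; apply/existsP; exists j0; rewrite hj0 -lt0n.
    by apply/card_gt0P; exists v; rewrite inE gvj0.
  have [g' gE] := colouring_avoid_lift gj0; exists g' => //.
  by rewrite inE -generic_colouring_lift // -gE.
by rewrite inE -generic_colouring_lift // => gen ->.
Qed.
End LiftColours.

Lemma count_generic_cat0 (V : finType) (B : {set {set V}}) (m1 m2 : seq nat) :
  count_generic (size (m1 ++ 0 :: m2)) B (nth 0 (m1 ++ 0 :: m2)) =
  count_generic (size (m1 ++ m2)) B (nth 0 (m1 ++ m2)).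
Proof.
have -> : size (m1 ++ 0 :: m2) = (size (m1 ++ m2)).+1 by rewrite !size_cat addnS.
have lt_m1 : size m1 < (size (m1 ++ m2)).+1 by rewrite size_cat ltnS leq_addr.
rewrite (@count_generic_lift _ _ (Ordinal lt_m1)) /=; last by rewrite nth_cat ltnn subnn.
apply: eq_count_generic => j _; rewrite /= /bump !nth_cat.
case: (ltnP j (size m1)) => j_m1; rewrite /= ?add0n ?j_m1 //.
by rewrite add1n ltnNge (leqW j_m1) subSn.
Qed.

Lemma count_generic_filter0 (V : finType) (B : {set {set V}}) (m1 m2 : seq nat) :
  let m := m1 ++ [seq a <- m2 | a != 0] in
  count_generic (size (m1 ++ m2)) B (nth 0 (m1 ++ m2)) =
  count_generic (size m) B (nth 0 m).
Proof.
elim: m2 m1 => [//|a m2 IH] m1 /=; case: eqP => [->|_].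
  by rewrite count_generic_cat0 IH.
by rewrite -cat_rcons IH cat_rcons.
Qed.

Lemma FB_qsym (k : fieldType) (V : finType) (B : {set {set V}}) : qsym (FB k B).
Proof. by move=> m; rewrite !FB_count_generic (count_generic_filter0 B [::]). Qed.

Lemma sum_fiber_card (V : finType) n (g : V -> 'I_n) :
  \sum_(j < n) fiber_card (fun v => nat_of_ord (g v)) j = #|V|.
Proof.
rewrite -sum1_card (partition_big g predT) //=; apply: eq_bigr => j _.
by rewrite sum1dep_card; apply: eq_card => v; rewrite !inE.
Qed.

Lemma FB_homogeneous (k : fieldType) (V : finType) (B : {set {set V}}) :
  homogeneous #|V| (FB k B).
Proof.
move=> m m_neq; rewrite FB_count_generic.
suff -> : count_generic (size m) B (nth 0 m) = 0 by [].
apply: eq_card0 => g; rewrite inE; apply: contraNF m_neq => /andP[_ /forallP g_m].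
rewrite -(sum_fiber_card g) sumnE (big_nth 0) big_mkord.
by apply/eqP/eq_bigr => j _; apply/esym/eqP.
Qed.

Lemma card_set_bool (T : finType) (b : bool) : #|[set _ : T | b]| = b * #|T|.
Proof. by case: b; rewrite ?cardsT ?cards0 ?mul1n. Qed.

Lemma max_generic_set0 (V : finType) (f : V -> nat) : max_generic set0 f.
Proof. by apply/forall_inP => I; rewrite inE. Qed.

Lemma FB_unit (k : fieldType) (m : seq nat) :
  FB k (set0 : {set {set void}}) m = oneS k m.
Proof.
rewrite FB_count_generic /oneS /count_generic /generic_colouring.
have fiber0 (g : void -> nat) j : fiber_card g j = 0.
  by apply/eqP; rewrite cards_eq0; apply/eqP/setP => -[].
under eq_finset do rewrite max_generic_set0 /=.
under eq_finset do under eq_forallb do rewrite fiber0.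
rewrite card_set_bool card_ffun card_void expn0 muln1; congr (nat_of_bool _)%:R%R.
apply/forallP/(all_nthP 0) => [m0 i im|m0 i]; last by rewrite eq_sym m0.
by have := m0 (Ordinal im); rewrite eq_sym.
Qed.

Lemma building_set_card0 (V : finType) (B : {set {set V}}) :
  building_set B -> #|V| = 0 -> B = set0.
Proof.
case=> Bn0 _ V0; apply/setP => I; rewrite inE; apply/negP => /Bn0.
by rewrite -cards_eq0 -leqn0 -V0 max_card.
Qed.

Lemma FB_counit (k : fieldType) (V : finType) (B : {set {set V}}) :
  building_set B -> counitQ (FB k B) = (#|V| == 0)%:R%R.
Proof.
move=> bsB; rewrite /counitQ /Mcoef FB_count_generic; congr (_ %:R)%R.
have [V0|V_gt0] := posnP #|V|; last first.
  by apply/eqP; rewrite -leqn0 (leq_trans (max_card _)) // card_ffun card_ord exp0n.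
rewrite /count_generic /generic_colouring (building_set_card0 bsB V0).
under eq_finset do rewrite max_generic_set0 /=.
have all_ord0 (P : pred 'I_0) : [forall j, P j] by apply/forallP => -[].
under eq_finset do rewrite all_ord0.
by rewrite card_set_bool card_ffun card_ord V0.
Qed.

Lemma uniq_max_const0 (V : finType) (I : {set V}) :
  uniq_max (fun _ => 0) I = [exists a, I == [set a]].
Proof.
apply/exists_inP/existsP => [[a aI /forall_inP Ia]|[a /eqP ->]].
  exists a; apply/eqP/setP => i; rewrite inE; apply/idP/eqP => [iI|->//].
  by have := Ia i iI; case: eqP.
by exists a; rewrite ?set11 //; apply/forall_inP => i; rewrite inE => ->.
Qed.

Lemma max_generic_const0 (V : finType) (B : {set {set V}}) :
  building_set B -> max_generic B (fun _ => 0) = discrete B.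
Proof.
case=> _ [B1 _]; apply/forall_inP/eqP => [B_singl|->].
  apply/setP => I; apply/idP/imsetP => [IB|[v _ ->]]; last exact: B1.
  by have := B_singl I IB; rewrite uniq_max_const0 => /existsP[a /eqP ->]; exists a.
by move=> _ /imsetP[v _ ->]; rewrite uniq_max_const0; apply/existsP; exists v.
Qed.

Lemma count_generic_1 (V : finType) (B : {set {set V}}) :
  count_generic 1 B (nth 0 [:: #|V|]) = max_generic B (fun _ => 0).
Proof.
have one_colour (g : {ffun V -> 'I_1}) :
    generic_colouring B (nth 0 [:: #|V|]) g = max_generic B (fun _ => 0).
  rewrite /generic_colouring (@eq_max_generic _ _ _ (fun _ => 0)) => [|v]; last by rewrite ord1.
  case: max_generic => //=; apply/forallP => j; rewrite ord1 /=.
  by apply/eqP; apply: eq_card => v; rewrite !inE ord1.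
rewrite /count_generic; under eq_finset do rewrite one_colour.
by rewrite card_set_bool card_ffun card_ord exp1n muln1.
Qed.

Lemma FB_zeta (k : fieldType) (V : finType) (B : {set {set V}}) :
  building_set B -> zetaQ #|V| (FB k B) = zetaB k B.
Proof.
move=> bsB; rewrite /zetaQ /zetaB -[Mcoef _ _]/(counitQ _) (FB_counit k bsB).
have [V0|V_gt0] := posnP #|V|.
  rewrite V0 big_geq // addr0 (building_set_card0 bsB V0) /discrete.
  suff -> : [set [set v] | v : V] = set0 by rewrite eqxx.
  by apply/setP => I; rewrite inE; apply/imsetP => -[v _ _]; move: (card0_eq V0 v).
rewrite add0r big_nat_recr //= big_nat_cond big1 ?add0r; last first.
  move=> n /andP[/andP[_ n_lt] _]; apply: FB_homogeneous.
  by rewrite /= addn0 (ltn_eqF n_lt).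
by rewrite /Mcoef FB_count_generic count_generic_1 max_generic_const0.
Qed.

Lemma card_set_bij (T U : finType) (f : T -> U) (P : pred U) :
  bijective f -> #|[set x | P (f x)]| = #|[set y | P y]|.
Proof.
case=> f' fK f'K; rewrite -(card_imset _ (can_inj fK)); apply: eq_card => y.
rewrite inE; apply/imsetP/idP => [[x]|Py]; first by rewrite inE => Px ->.
by exists (f' y); rewrite ?inE f'K.
Qed.

Lemma le_seqs_all2 m s : (s \in le_seqs m) = all2 leq s m.
Proof.
elim: m s => [|a m IH] s; first by case: s.
have -> : le_seqs (a :: m) = [seq i :: s | i <- iota 0 a.+1, s <- le_seqs m] by [].
case: s => [|b t]; first by apply/allpairsP => -[[x y] [_ _]].
have -> : all2 leq (b :: t) (a :: m) = (b <= a) && all2 leq t m by [].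
have mem_iota0 z : (z \in iota 0 a.+1) = (z <= a) by rewrite mem_iota.
apply/allpairsP/andP => [[[x y] [xa ym [-> ->]]]|[ba tm]].
  by rewrite -IH -mem_iota0; split.
by exists (b, t); split => //; rewrite ?mem_iota0 ?IH.
Qed.

Lemma le_seqs_uniq m : uniq (le_seqs m).
Proof.
elim: m => [//|a m IH]; apply: allpairs_uniq => //; first exact: iota_uniq.
by move=> [x y] [x' y'] _ _ /= [-> ->].
Qed.

Lemma le_seqsP m s : reflect
  (size s = size m /\ forall j, j < size m -> nth 0 s j <= nth 0 m j) (s \in le_seqs m).
Proof.
rewrite le_seqs_all2 all2E; apply: (iffP andP) => [[/eqP sz /(all_nthP (0, 0)) sm]|[sz sm]].
  by split=> // j jm; have := sm j; rewrite size_zip sz minnn nth_zip //; apply.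
rewrite sz; split=> //; apply/(all_nthP (0, 0)) => j.
by rewrite size_zip sz minnn nth_zip // => /sm.
Qed.

Lemma mkseq_eqP (f : nat -> nat) (s : seq nat) n : size s = n ->
  (mkseq f n == s) = [forall j : 'I_n, f j == nth 0 s j].
Proof.
move=> sz_s; apply/eqP/forallP => [<- j|f_s]; first by rewrite nth_mkseq.
apply: (@eq_from_nth _ 0); rewrite size_mkseq // => j jn.
by rewrite nth_mkseq //; apply/eqP/(f_s (Ordinal jn)).
Qed.

Section DisjointUnion.
Variables (V1 V2 : finType) (B1 : {set {set V1}}) (B2 : {set {set V2}}).

Lemma max_generic_dunion (f : V1 + V2 -> nat) :
  max_generic (dunion B1 B2) f = max_generic B1 (f \o inl) && max_generic B2 (f \o inr).
Proof.
have inl_inj : injective (@inl V1 V2) by move=> ? ? [].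
have inr_inj : injective (@inr V1 V2) by move=> ? ? [].
apply/forall_inP/andP => [genB|[/forall_inP genB1 /forall_inP genB2] I].
  split; apply/forall_inP => I IB.
    by rewrite -uniq_max_imset //; apply: genB; rewrite inE imset_f.
  by rewrite -uniq_max_imset //; apply: genB; rewrite inE imset_f ?orbT.
by rewrite inE => /orP[] /imsetP[J JB ->]; rewrite uniq_max_imset // ?genB1 ?genB2.
Qed.

Lemma fiber_card_sum (f : V1 + V2 -> nat) j :
  fiber_card f j = fiber_card (f \o inl) j + fiber_card (f \o inr) j.
Proof. by rewrite /fiber_card -!sum1dep_card big_sumType. Qed.

Variable n : nat.

Definition split_colouring (g : {ffun V1 + V2 -> 'I_n}) :=
  ([ffun a => g (inl a)], [ffun b => g (inr b)]).

Lemma split_colouring_bij : bijective split_colouring.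
Proof.
exists (fun x : {ffun V1 -> 'I_n} * {ffun V2 -> 'I_n} =>
  [ffun z => match z with inl a => x.1 a | inr b => x.2 b end]).
  by move=> g; apply/ffunP => -[a|b]; rewrite !ffunE.
by case=> g1 g2; congr (_, _); apply/ffunP => v; rewrite !ffunE.
Qed.

Lemma count_generic_dunion_pairs (h : nat -> nat) :
  count_generic n (dunion B1 B2) h =
  #|[set x : {ffun V1 -> 'I_n} * {ffun V2 -> 'I_n} |
     [&& max_generic B1 (fun a => nat_of_ord (x.1 a)),
         max_generic B2 (fun b => nat_of_ord (x.2 b)) &
         [forall j : 'I_n, fiber_card (fun a => nat_of_ord (x.1 a)) j +
                           fiber_card (fun b => nat_of_ord (x.2 b)) j == h j]]]|.
Proof.
rewrite -(card_set_bij _ split_colouring_bij); apply: eq_card => g; rewrite !inE.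
rewrite /generic_colouring max_generic_dunion -andbA.
congr [&& _, _ & _].
- by apply: eq_max_generic => v; rewrite ffunE.
- by apply: eq_max_generic => v; rewrite ffunE.
- apply: eq_forallb => j; rewrite fiber_card_sum.
  by congr (_ + _ == _); apply: eq_fiber_card => v; rewrite /= ffunE.
Qed.

Lemma count_generic_dunion (m : seq nat) : size m = n ->
  count_generic n (dunion B1 B2) (nth 0 m) =
  \sum_(s <- le_seqs m) count_generic n B1 (nth 0 s) *
                        count_generic n B2 (fun j => nth 0 m j - nth 0 s j).
Proof.
(* Sort the pairs by the colour-class sizes [s] of their [V1] component. *)
move=> sz_m; rewrite count_generic_dunion_pairs; set P := [set x | _].
pose fibers (g1 : {ffun V1 -> 'I_n}) := mkseq (fiber_card (fun a => nat_of_ord (g1 a))) n.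
have fibers_le x : x \in P -> fibers x.1 \in le_seqs m.
  rewrite inE => /and3P[_ _ /forallP x_m]; apply/le_seqsP; rewrite size_mkseq.
  split=> // j; rewrite sz_m => jn.
  by rewrite nth_mkseq // -(eqP (x_m (Ordinal jn))) leq_addr.
rewrite -sum1_card (eq_bigr (fun x => \sum_(s <- le_seqs m) (fibers x.1 == s))); last first.
  move=> x xP; rewrite (bigD1_seq (fibers x.1)) ?le_seqs_uniq ?fibers_le //= eqxx.
  by rewrite big1 ?addn0 // => s; rewrite eq_sym => /negPf ->.
rewrite exchange_big /=; apply: eq_big_seq => s /le_seqsP[sz_s s_m].
rewrite -big_mkcondr sum1dep_card -cardsX; apply: eq_card => -[g1 g2].
rewrite !inE /= /generic_colouring /fibers mkseq_eqP; last by rewrite sz_s.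
case: (max_generic B1 _); case: (max_generic B2 _); rewrite //= ?andbF //.
apply/andP/andP => [[/forallP sum_m /forallP g1_s]|[/forallP g1_s /forallP g2_ms]].
  split; apply/forallP => j; first exact: g1_s.
  by move: (sum_m j); rewrite (eqP (g1_s j)) => /eqP <-; rewrite addKn.
split; apply/forallP => j; last exact: g1_s.
by rewrite (eqP (g1_s j)) (eqP (g2_ms j)) subnKC // s_m // sz_m.
Qed.
End DisjointUnion.

Lemma FB_dunion (k : fieldType) (V1 V2 : finType) (B1 : {set {set V1}})
    (B2 : {set {set V2}}) (m : seq nat) :
  FB k (dunion B1 B2) m = mulS (FB k B1) (FB k B2) m.
Proof.
rewrite FB_count_generic (count_generic_dunion _ _ (erefl _)) /mulS natr_sum.
apply: eq_big_seq => s /le_seqsP[sz_s s_m].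
set d := [seq _ | p <- zip s m].
have sz_d : size d = size m by rewrite size_map size_zip sz_s minnn.
rewrite natrM !FB_count_generic sz_s sz_d; congr (_ * _%:R)%R.
apply: eq_count_generic => j; rewrite inE => jm.
by rewrite (nth_map (0, 0)) ?size_zip ?sz_s ?minnn // nth_zip.
Qed.

Section RestrictContract.
Variables (V : finType) (B : {set {set V}}) (I : {set V}) (f : V -> nat) (p : nat).
Hypothesis f_lowE : forall v, (f v < p) = (v \in I).

Lemma uniq_max_setU_low (J I' : {set V}) : J != set0 -> J \subset ~: I ->
  I' \subset I -> uniq_max f (J :|: I') = uniq_max f J.
Proof.
move=> Jn0 JI I'I; apply: uniq_max_setU => // a i aJ iI'.
have aI : a \notin I by have := subsetP JI a aJ; rewrite inE.
by move: aI (subsetP I'I i iI'); rewrite -!f_lowE -leqNgt => /(leq_trans _); apply.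
Qed.

Lemma max_generic_restr_contr : max_generic B f ->
  max_generic (restr B I) (f \o val) && max_generic (contr B I) (f \o val).
Proof.
move/forall_inP=> genB; apply/andP; split; apply/forall_inP => J.
  by rewrite inE => JB; rewrite -uniq_max_imset; [apply: genB | apply: val_inj].
rewrite inE => /andP[Jn0 /orP[JB|/existsP[I' /andP[I'I JI'B]]]].
  by rewrite -uniq_max_imset; [apply: genB | apply: val_inj].
rewrite -uniq_max_imset; last exact: val_inj.
rewrite -(@uniq_max_setU_low _ I') ?imset_eq0 //; first exact: genB.
by apply/subsetP => _ /imsetP[u _ ->]; rewrite inE (valP u).
Qed.

Lemma max_generic_of_restr_contr :
  max_generic (restr B I) (f \o val) -> max_generic (contr B I) (f \o val) ->
  max_generic B f.
Proof.
move=> /forall_inP genR /forall_inP genC; apply/forall_inP => K KB.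
(* If [K] leaves [I], its top colours lie in [K :\: I], a member of [B/I]. *)
have [KI|KnI] := boolP (K \subset I).
  have KE : K = [set val x | x in [set u : {v | v \in I} | val u \in K]].
    apply/setP => v; apply/idP/imsetP => [vK|[u]]; last by rewrite inE => uK ->.
    by exists (exist _ v (subsetP KI v vK)) => //; rewrite inE.
  rewrite KE uniq_max_imset; last exact: val_inj.
  by apply: genR; rewrite inE -KE.
have KDE : K :\: I = [set val x | x in [set u : {v | v \notin I} | val u \in K]].
  apply/setP => v; rewrite inE; apply/andP/imsetP => [[vI vK]|[u]].
    by exists (exist (fun v => v \notin I) v vI) => //; rewrite inE.
  by rewrite inE => uK ->; split => //; apply: (valP u).
have KDn0 : K :\: I != set0 by rewrite setD_eq0.
rewrite -(setID K I) setUC uniq_max_setU_low ?subsetIr //; last first.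
  by apply/subsetP => v /setDP[_ vI]; rewrite inE.
rewrite KDE uniq_max_imset; last exact: val_inj.
apply: genC; rewrite inE -(imset_eq0 val) -KDE KDn0 /=.
apply/orP; right; apply/existsP; exists (K :&: I).
by rewrite subsetIr /= setUC setID.
Qed.

Lemma max_generic_split : max_generic B f =
  max_generic (restr B I) (f \o val) && max_generic (contr B I) (f \o val).
Proof.
apply/idP/andP => [/max_generic_restr_contr/andP//|[]].
exact: max_generic_of_restr_contr.
Qed.

End RestrictContract.

Definition low_colours (V : finType) (p n : nat) (g : {ffun V -> 'I_n}) : {set V} :=
  [set v | g v < p].

Definition dec_bool (b : bool) : {b} + {~~ b} :=
  if b as c return {c} + {~~ c} then left isT else right isT.

Section Glue.
Variables (V : finType) (I : {set V}) (p q : nat).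

Definition glue (g1 : {ffun {v : V | v \in I} -> 'I_p})
    (g2 : {ffun {v : V | v \notin I} -> 'I_q}) : {ffun V -> 'I_(p + q)} :=
  [ffun v => match dec_bool (v \in I) with
             | left vI => lshift q (g1 (exist _ v vI))
             | right vI => rshift p (g2 (exist _ v vI))
             end].

Section GlueOf.
Variables (g1 : {ffun {v : V | v \in I} -> 'I_p}) (g2 : {ffun {v : V | v \notin I} -> 'I_q}).

Lemma glue_in (u : {v : V | v \in I}) : glue g1 g2 (val u) = lshift q (g1 u).
Proof.
rewrite ffunE; case: dec_bool => uI; first by congr (lshift q (g1 _)); apply: val_inj.
by have := valP u; rewrite (negPf uI).
Qed.

Lemma glue_out (u : {v : V | v \notin I}) : glue g1 g2 (val u) = rshift p (g2 u).
Proof.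
rewrite ffunE; case: dec_bool => uI; last by congr (rshift p (g2 _)); apply: val_inj.
by have := valP u; rewrite uI.
Qed.

Lemma low_colours_glue : low_colours p (glue g1 g2) = I.
Proof.
apply/setP => v; rewrite inE; have [vI|vI] := boolP (v \in I).
  by have := glue_in (exist _ v vI); rewrite /= => ->; rewrite /= ltn_ord.
by have := glue_out (exist _ v vI); rewrite /= => ->; rewrite /= ltnNge leq_addr.
Qed.

Lemma fiber_card_glue_low j : j < p ->
  fiber_card (fun v => nat_of_ord (glue g1 g2 v)) j = fiber_card (fun u => nat_of_ord (g1 u)) j.
Proof.
move=> jp; rewrite /fiber_card -(card_imset _ val_inj); apply: eq_card => v; rewrite inE.
apply/idP/imsetP => [/eqP gv|[u]]; last by rewrite inE => /eqP uj ->; rewrite glue_in /= uj.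
have vI : v \in I by rewrite -low_colours_glue inE gv.
exists (exist _ v vI); rewrite // inE.
by have := glue_in (exist _ v vI); rewrite /= => gvE; rewrite -gv gvE.
Qed.

Lemma fiber_card_glue_high j :
  fiber_card (fun v => nat_of_ord (glue g1 g2 v)) (p + j) =
  fiber_card (fun u => nat_of_ord (g2 u)) j.
Proof.
rewrite /fiber_card -(card_imset _ val_inj); apply: eq_card => v; rewrite inE.
apply/idP/imsetP => [/eqP gv|[u]]; last by rewrite inE => /eqP uj ->; rewrite glue_out /= uj.
have vI : v \notin I by rewrite -low_colours_glue inE gv ltnNge leq_addr.
exists (exist _ v vI); rewrite // inE.
by have := glue_out (exist _ v vI); rewrite /= => gvE; move: gv; rewrite gvE /= => /addnI ->.
Qed.

Lemma generic_colouring_glue (B : {set {set V}}) (h : nat -> nat) :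
  generic_colouring B h (glue g1 g2) =
  generic_colouring (restr B I) h g1 &&
  generic_colouring (contr B I) (fun j => h (p + j)) g2.
Proof.
rewrite /generic_colouring (@max_generic_split _ _ I _ p); last first.
  by move=> v; rewrite -[in RHS]low_colours_glue inE.
have fibersE : [forall j : 'I_(p + q), fiber_card (fun v => nat_of_ord (glue g1 g2 v)) j == h j] =
    [forall j : 'I_p, fiber_card (fun u => nat_of_ord (g1 u)) j == h j] &&
    [forall j : 'I_q, fiber_card (fun u => nat_of_ord (g2 u)) j == h (p + j)].
  apply/forallP/andP => [fib_h|[/forallP fib1_h /forallP fib2_h] j].
    split; apply/forallP => j.
      by have := fib_h (lshift q j); rewrite /= fiber_card_glue_low.
    by have := fib_h (rshift p j); rewrite /= fiber_card_glue_high.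
  have [jp|pj] := ltnP j p; first by rewrite fiber_card_glue_low // (fib1_h (Ordinal jp)).
  have jq : j - p < q by have := ltn_ord j; lia.
  by rewrite -(subnKC pj) fiber_card_glue_high (fib2_h (Ordinal jq)).
rewrite fibersE -andbACA; congr (_ && _ && _).
  by apply: eq_max_generic => u; rewrite /= glue_in.
by congr (_ && _); apply: eq_max_generic_lt => x y; rewrite /= !glue_out /= ltn_add2l.
Qed.
End GlueOf.

Lemma glue_inj : injective (fun g => glue g.1 g.2).
Proof.
move=> [a1 a2] [b1 b2] /= ab; congr (_, _); apply/ffunP => u.
  by have := glue_in a1 a2 u; rewrite ab glue_in => /lshift_inj.
by have := glue_out a1 a2 u; rewrite ab glue_out => /rshift_inj.
Qed.

End Glue.

Lemma glue_low_colours (V : finType) (p q : nat) (g : {ffun V -> 'I_(p + q)}) (I : {set V}) :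
  low_colours p g = I -> exists g12, g = @glue V I p q g12.1 g12.2.
Proof.
move=> gI; have lowE v : (g v < p) = (v \in I) by rewrite -gI inE.
have low (u : {v : V | v \in I}) : g (val u) < p by rewrite lowE (valP u).
have high (u : {v : V | v \notin I}) : g (val u) - p < q.
  by have := ltn_ord (g (val u)); move: (valP u); rewrite -lowE; lia.
exists ([ffun u => Ordinal (low u)], [ffun u => Ordinal (high u)]).
apply/ffunP => v; apply: val_inj; rewrite ffunE; case: dec_bool => vI; rewrite ffunE //=.
by rewrite subnKC // leqNgt lowE.
Qed.

Lemma count_generic_add (V : finType) (B : {set {set V}}) (p q : nat) (h : nat -> nat) :
  count_generic (p + q) B h =
  \sum_(I : {set V}) count_generic p (restr B I) h *
                     count_generic q (contr B I) (fun j => h (p + j)).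
Proof.
rewrite /count_generic -sum1_card (partition_big (@low_colours V p (p + q)) predT) //=.
apply: eq_bigr => I _; rewrite sum1dep_card -cardsX -(card_imset _ (@glue_inj V I p q)).
apply: eq_card => g; rewrite !inE; apply/andP/imsetP => [[gen /eqP gI]|[g12]].
  have [g12 gE] := glue_low_colours gI; exists g12 => //.
  by rewrite !inE -generic_colouring_glue -gE.
by rewrite !inE -generic_colouring_glue => gen ->; rewrite gen low_colours_glue.
Qed.

Lemma FB_coprod (k : fieldType) (V : finType) (B : {set {set V}}) (b c : seq nat) :
  coprodQ (FB k B) b c =
  (\sum_(I : {set V}) tensorQ (FB k (restr B I)) (FB k (contr B I)) b c)%R.
Proof.
rewrite /coprodQ /tensorQ /Mcoef FB_count_generic size_cat count_generic_add natr_sum.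
apply: eq_bigr => I _; rewrite natrM !FB_count_generic.
congr (_%:R * _%:R)%R; apply: eq_count_generic => j; rewrite inE => jlt.
  by rewrite nth_cat jlt.
by rewrite nth_cat ltnNge leq_addr addKn.
Qed.

Local Open Scope ring_scope.

Theorem mainTheorem4 (k : fieldType) :
  (forall (V : finType) (B : {set {set V}}), building_set B ->
     qsym (FB k B) /\ homogeneous #|V| (FB k B)) /\
  (forall m, FB k (set0 : {set {set void}}) m = oneS k m) /\
  (forall (V1 V2 : finType) (B1 : {set {set V1}}) (B2 : {set {set V2}}),
     building_set B1 -> building_set B2 ->
     forall m, FB k (dunion B1 B2) m = mulS (FB k B1) (FB k B2) m) /\
  (forall (V : finType) (B : {set {set V}}), building_set B ->
     forall b c, composition b -> composition c ->
       coprodQ (FB k B) b c =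
       \sum_(I : {set V}) tensorQ (FB k (restr B I)) (FB k (contr B I)) b c) /\
  (forall (V : finType) (B : {set {set V}}), building_set B ->
     counitQ (FB k B) = (#|V| == 0)%N%:R) /\
  (forall (V : finType) (B : {set {set V}}), building_set B ->
     zetaQ #|V| (FB k B) = zetaB k B).
Proof.
split; first by move=> V B _; split; [apply: FB_qsym | apply: FB_homogeneous].
split; first exact: FB_unit.
split; first by move=> V1 V2 B1 B2 _ _ m; apply: FB_dunion.
split; first by move=> V B _ b c _ _; apply: FB_coprod.
by split=> V B bsB; [apply: FB_counit | apply: FB_zeta].
Qed.
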